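(* Let $x,y$ be non-commuting indeterminates and $C=xyx^{-1}y^{-1}$. Let $(R_n)_{n\in\mathbb Z}$ be the solution of $$R_{n+1}CR_{n-1}=R_n^2+1\qquad(n\in\mathbb Z)$$ with $R_0=yxy^{-1}$ and $R_1=y$. Set $$y_1=R_1R_0^{-1},\qquad y_2=R_1^{-1}R_0^{-1},\qquad y_3=R_1^{-1}R_0.$$ Then, as formal power series in a central variable $t$, $$\sum_{n\ge0}t^nR_n=\Big(1-t\big(1-t(1-ty_3)^{-1}y_2\big)^{-1}y_1\Big)^{-1}R_0.$$
   Context: Work in the free skew field (non-commutative rational functions) over $\mathbb C$ generated by $x,y$. Formal power series in $t$ with coefficients in this skew field are used, with $t$ commuting with everything. The inverse $(1-tA)^{-1}$ means $\sum_{k\ge0}t^kA^k$. *)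

From HB Require Import structures.
From mathcomp Require Import all_boot all_order all_algebra.
Set Implicit Arguments. Unset Strict Implicit. Unset Printing Implicit Defensive.
Import Order.TTheory GRing.Theory Num.Theory.
Local Open Scope ring_scope.

(* Formal power series in a central variable t over a (possibly
   non-commutative) ring D, represented by their coefficient sequences:
   f represents sum_n t^n f n. *)
Definition pseries (D : Type) := nat -> D.

Section PS.
Variable D : pzRingType.

Definition ps_const (a : D) : pseries D := fun n => if n is 0 then a else 0.

(* Cauchy product; t is central, so (f*g)_n = sum_{i+j=n} f_i g_j
   (order of the factors preserved). *)
Definition ps_mul (f g : pseries D) : pseries D :=
  fun n => \sum_(i < n.+1) f i * g (n - i)%N.

Definition ps_pow (A : pseries D) (k : nat) : pseries D :=
  iter k (ps_mul A) (ps_const 1).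

(* (1 - tA)^{-1} := sum_{k>=0} t^k A^k ; the coefficient of t^n is
   sum_{k<=n} (A^k)_{n-k}. *)
Definition ps_geom (A : pseries D) : pseries D :=
  fun n => \sum_(k < n.+1) ps_pow A k (n - k)%N.
End PS.

From HB Require Import structures.
From mathcomp Require Import all_boot all_order all_algebra.
From Stdlib Require Import FunctionalExtensionality.
Import Order.TTheory GRing.Theory Num.Theory.
Local Open Scope ring_scope.

(* The recurrence preserves the quasi-commutation R_{n+1} C R_n = R_n R_{n+1},
   which holds at n = 0; given it, R_{n+2} = (R_{n+1} + R_{n+1}^-1) R_n^-1 R_{n+1},
   so that phi(R_n, R_{n+1}) = R_{n+1} R_n^-1 + R_{n+1}^-1 R_n^-1 + R_{n+1}^-1 R_n
   is conserved and R satisfies the linear recurrence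
   R_{n+2} = (y1 + y2 + y3) R_{n+1} - y3 y1 R_n  (note C = y3 y1).
   On the series side, (1 - tA)^-1 obeys a second-order recurrence whenever the
   coefficients of A are geometric from index 1 on; applied twice, this shows
   that the nested geometric series obeys the same recurrence, with initial
   coefficients 1 and y1. *)

Lemma sum_triangle_swap {V : nmodType} n (F : nat -> nat -> V) :
  \sum_(k < n.+1) \sum_(i < (n - k).+1) F k i =
  \sum_(i < n.+1) \sum_(k < (n - i).+1) F k i.
Proof.
have square (G : nat -> nat -> V) :
    \sum_(k < n.+1) \sum_(i < (n - k).+1) G k i =
    \sum_(k < n.+1) \sum_(i < n.+1) (if (k + i <= n)%N then G k i else 0).
  apply: eq_bigr => k _; rewrite (big_ord_widen n.+1 (G k)) ?ltnS ?leq_subr //.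
  rewrite big_mkcond; apply: eq_bigr => i _.
  by rewrite ltnS leq_subRL // -ltnS.
rewrite square exchange_big (square (fun i k => F k i)).
by apply: eq_bigr => i _; apply: eq_bigr => k _; rewrite addnC.
Qed.

Section PowerSeries.
Context {D : pzRingType}.
Implicit Types (f g A : pseries D) (a c : D).

Lemma ps_mulSn f g n :
  ps_mul f g n.+1 = f 0%N * g n.+1 + ps_mul (fun k => f k.+1) g n.
Proof. by rewrite /ps_mul big_ord_recl subn0. Qed.

Lemma ps_mul_scalel c f g n :
  ps_mul (fun k => c * f k) g n = c * ps_mul f g n.
Proof. by rewrite /ps_mul mulr_sumr; apply: eq_bigr => i _; rewrite mulrA. Qed.

Lemma ps_mul_constl a f n : ps_mul (ps_const a) f n = a * f n.
Proof.
rewrite /ps_mul big_ord_recl subn0 big1 ?addr0 // => i _.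
by rewrite mul0r.
Qed.

Lemma ps_mul_constr a f n : ps_mul f (ps_const a) n = f n * a.
Proof.
rewrite /ps_mul big_ord_recr subnn /= big1 ?add0r // => i _.
by rewrite /ps_const; case: (n - i)%N (subn_gt0 i n) => [|m]; rewrite ?ltn_ord ?mulr0.
Qed.

Lemma ps_geom0 A : ps_geom A 0%N = 1.
Proof. by rewrite /ps_geom big_ord1. Qed.

Lemma ps_geomS A n : ps_geom A n.+1 = ps_mul A (ps_geom A) n.
Proof.
transitivity (\sum_(k < n.+1) ps_mul A (ps_pow A k) (n - k)%N).
  by rewrite /ps_geom big_ord_recl /= add0r.
rewrite /ps_mul /ps_geom; under [RHS]eq_bigr => i _ do rewrite mulr_sumr.
rewrite (@sum_triangle_swap _ n (fun k i => A i * ps_pow A k (n - k - i)%N)).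
by apply: eq_bigr => k _; apply: eq_bigr => i _; rewrite subnAC.
Qed.

Lemma ps_geom1 A : ps_geom A 1%N = A 0%N.
Proof. by rewrite ps_geomS /ps_mul big_ord1 ps_geom0 mulr1. Qed.

Lemma ps_geom_const c n : ps_geom (ps_const c) n = c ^+ n.
Proof.
by elim: n => [|n IH]; rewrite ?ps_geom0 // ps_geomS ps_mul_constl IH exprS.
Qed.

Lemma ps_geom_rec2 A c :
  (forall k, A k.+2 = c * A k.+1) ->
  forall n, ps_geom A n.+2 =
    (A 0%N + c) * ps_geom A n.+1 + (A 1%N - c * A 0%N) * ps_geom A n.
Proof.
move=> Arec n; set G := ps_geom A.
pose S := ps_mul (fun k => A k.+1) G.
have GSS m : G m.+2 = A 0%N * G m.+1 + S m by rewrite /G ps_geomS ps_mulSn.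
have SS m : S m.+1 = A 1%N * G m.+1 + c * S m.
  rewrite /S ps_mulSn -ps_mul_scalel; congr (_ + ps_mul _ _ _).
  exact: functional_extensionality Arec.
case: n => [|n].
  rewrite GSS /S /ps_mul big_ord1 /G ps_geom1 ps_geom0 !mulr1 mulrDl.
  by rewrite addrACA subrr addr0.
have Sn : S n = G n.+2 - A 0%N * G n.+1 by rewrite GSS addrAC subrr add0r.
rewrite GSS SS Sn mulrBr mulrA mulrDl mulrBl -addrA.
by congr (_ + _); rewrite addrCA.
Qed.

Definition contfrac2 d c : pseries D :=
  ps_geom (ps_mul (ps_geom (ps_const c)) (ps_const d)).

Definition contfrac3 a d c : pseries D :=
  ps_geom (ps_mul (contfrac2 d c) (ps_const a)).

Lemma contfrac2_0 d c : contfrac2 d c 0%N = 1.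
Proof. exact: ps_geom0. Qed.

Lemma contfrac2_1 d c : contfrac2 d c 1%N = d.
Proof. by rewrite /contfrac2 ps_geom1 ps_mul_constr ps_geom_const mul1r. Qed.

Lemma contfrac2_rec d c n : contfrac2 d c n.+2 = (d + c) * contfrac2 d c n.+1.
Proof.
rewrite /contfrac2 (@ps_geom_rec2 _ c) => [|k]; last first.
  by rewrite !ps_mul_constr !ps_geom_const exprS mulrA.
by rewrite !ps_mul_constr !ps_geom_const expr1 expr0 mul1r subrr mul0r addr0.
Qed.

Lemma contfrac3_0 a d c : contfrac3 a d c 0%N = 1.
Proof. exact: ps_geom0. Qed.

Lemma contfrac3_1 a d c : contfrac3 a d c 1%N = a.
Proof. by rewrite /contfrac3 ps_geom1 ps_mul_constr contfrac2_0 mul1r. Qed.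

Lemma contfrac3_rec a d c n :
  contfrac3 a d c n.+2 =
    (a + d + c) * contfrac3 a d c n.+1 - c * a * contfrac3 a d c n.
Proof.
rewrite /contfrac3 (@ps_geom_rec2 _ (d + c)) => [|k]; last first.
  by rewrite !ps_mul_constr contfrac2_rec mulrA.
rewrite !ps_mul_constr contfrac2_0 contfrac2_1 mul1r addrA -mulrBl.
by rewrite opprD addrA subrr add0r !mulNr.
Qed.

End PowerSeries.

Lemma rec2_eq_mulr {D : pzRingType} (s p a : D) (u v : nat -> D) :
  (forall n, u n.+2 = s * u n.+1 - p * u n) ->
  (forall n, v n.+2 = s * v n.+1 - p * v n) ->
  u 0%N = v 0%N * a -> u 1%N = v 1%N * a ->
  forall n, u n = v n * a.
Proof.
move=> urec vrec u0 u1 n.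
suff: u n = v n * a /\ u n.+1 = v n.+1 * a by case.
elim: n => [|n [IHn IHn1]] //; split => //.
by rewrite urec vrec IHn IHn1 mulrBl !mulrA.
Qed.

Definition phi {D : unitRingType} (a b : D) := b / a + b^-1 / a + b^-1 * a.

Section QuasiCommutingStep.
Context {D : unitRingType} {C a b c : D}.
Hypotheses (a_unit : a \is a GRing.unit) (b_unit : b \is a GRing.unit).
Hypothesis c_unit : c \is a GRing.unit.
Hypothesis quasi : b * C * a = a * b.
Hypothesis step : c * C * a = b ^+ 2 + 1.

Lemma quasi_conj : C * a = b^-1 * (a * b).
Proof. by rewrite -[LHS](mulKr b_unit); congr (_ * _); rewrite mulrA quasi. Qed.

Lemma quasi_coef : C = b^-1 * a * (b / a).
Proof. by rewrite mulrA -(mulrA b^-1) -quasi_conj mulrK. Qed.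

Lemma next_closed : c = (b + b^-1) / a * b.
Proof.
have Ca_unit : C * a \is a GRing.unit by rewrite quasi_conj !unitrMl ?unitrV.
apply: (mulIr Ca_unit); rewrite mulrA step quasi_conj !mulrA mulrK // divrK //.
by rewrite mulrDl mulVr // expr2.
Qed.

Lemma next_linear : c = phi a b * b - C * a.
Proof. by rewrite quasi_conj {1}next_closed /phi !mulrDl mulrA addrK. Qed.

Lemma next_quasi_comm : c * C * b = b * c.
Proof.
rewrite -[b in c * C * b](mulVKr a_unit) !mulrA step [in RHS]next_closed !mulrA.
by rewrite mulrDr mulrV // expr2.
Qed.

Lemma phi_next : phi b c = phi a b.
Proof.
have cb : c / b = (b + b^-1) / a by rewrite next_closed mulrK.
have cinv : c^-1 / b + c^-1 * b = b^-1 * a.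
  rewrite -mulrDr; apply: (mulrI c_unit); rewrite mulVKr //.
  by rewrite next_closed !mulrA mulrK // divrK // addrC.
by rewrite /phi -addrA cinv cb mulrDl.
Qed.

End QuasiCommutingStep.

Section QuasiCommutingSequence.
Context {D : unitRingType} (C : D) (r : nat -> D).
Hypothesis r_unit : forall n, r n \is a GRing.unit.
Hypothesis r_quasi0 : r 1%N * C * r 0%N = r 0%N * r 1%N.
Hypothesis r_step : forall n, r n.+2 * C * r n = r n.+1 ^+ 2 + 1.

Lemma seq_quasi_comm n : r n.+1 * C * r n = r n * r n.+1.
Proof.
elim: n => [|n IHn] //.
exact: next_quasi_comm (r_unit _) (r_unit _) IHn (r_step _).
Qed.

Lemma seq_phi_invariant n : phi (r n) (r n.+1) = phi (r 0%N) (r 1%N).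
Proof.
elim: n => [|n IHn] //.
by rewrite (phi_next (r_unit _) (r_unit _) (r_unit _) (seq_quasi_comm n) (r_step n)).
Qed.

Lemma seq_linear_rec n : r n.+2 = phi (r 0%N) (r 1%N) * r n.+1 - C * r n.
Proof.
rewrite -(seq_phi_invariant n).
exact: next_linear (r_unit _) (r_unit _) (seq_quasi_comm n) (r_step n).
Qed.

End QuasiCommutingSequence.

Theorem theorem3p3 (D : unitRingType)
  (Ddiv : forall a : D, a != 0 -> a \is a GRing.unit)
  (Dchar0 : [pchar D] =i pred0)
  (x y : D) (hx : x != 0) (hy : y != 0)
  (R : int -> D)
  (hR0 : R 0 = y * x * y^-1) (hR1 : R 1 = y)
  (hRnz : forall n : int, R n != 0)
  (hrec : forall n : int,
      R (n + 1) * (x * y * x^-1 * y^-1) * R (n - 1) = R n ^+ 2 + 1) :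
  let y1 := R 1 * (R 0)^-1 in
  let y2 := (R 1)^-1 * (R 0)^-1 in
  let y3 := (R 1)^-1 * R 0 in
  (fun n : nat => R (Posz n)) =
  ps_mul
    (ps_geom
       (ps_mul
          (ps_geom (ps_mul (ps_geom (ps_const y3)) (ps_const y2)))
          (ps_const y1)))
    (ps_const (R 0)).
Proof.
move=> y1 y2 y3; set C := x * y * x^-1 * y^-1.
have [x_unit y_unit] := (Ddiv _ hx, Ddiv _ hy).
pose r n := R (Posz n).
have r_unit n : r n \is a GRing.unit := Ddiv _ (hRnz _).
have r_step n : r n.+2 * C * r n = r n.+1 ^+ 2 + 1.
  have e1 : (n.+1 : int) + 1 = n.+2 by rewrite -[1]/(Posz 1) -PoszD addn1.
  have e2 : (n.+1 : int) - 1 = n by rewrite -addn1 PoszD addrK.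
  by have := hrec n.+1; rewrite e1 e2.
have r_quasi0 : r 1%N * C * r 0%N = r 0%N * r 1%N.
  by rewrite /r hR0 hR1 /C !mulrA !(divrK y_unit) (divrK x_unit) (mulrK y_unit).
have C_y : C = y3 * y1 := quasi_coef (r_unit 0%N) (r_unit 1%N) r_quasi0.
apply: functional_extensionality => n; rewrite ps_mul_constr.
change (r n = contfrac3 y1 y2 y3 n * R 0); move: n.
apply: (@rec2_eq_mulr _ (y1 + y2 + y3) C _ r (contfrac3 y1 y2 y3)) => [n|n||].
- exact: seq_linear_rec.
- by rewrite C_y; apply: contfrac3_rec.
- by rewrite (contfrac3_0 y1 y2 y3) mul1r.
- by rewrite (contfrac3_1 y1 y2 y3) /y1 (divrK (r_unit 0%N)).
Qed.
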